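(* Let $(X,d)$ be a metric space and $\pi:X\to X_0$ a fibration. For $x\in X_0$ let $d_x$ be the restriction of $d$ to the fiber $\pi^{-1}\{x\}$. Let $\mu,\nu$ be measures on $X$ with $\pi_*\mu=\pi_*\nu=\lambda$, and for $x\in X_0$ let $\mu_x,\nu_x$ be the disintegrated measures on $\pi^{-1}(x)$ (so that $\mu=\int\mu_x\,d\lambda(x)$, $\nu=\int\nu_x\,d\lambda(x)$). Then $$d_L(\mu,\nu)\le\sup_{x\in X_0} d_{L,x}(\mu_x,\nu_x),$$ where $d_{L,x}$ denotes the Lévy–Prokhorov distance on $\pi^{-1}(x)$ with respect to $d_x$.
   Context: For measures $\mu,\nu$ on a metric space $(Y,\delta)$, the Lévy–Prokhorov distance is $d_L(\mu,\nu)=\inf\{\varepsilon>0:\ \nu(A_\varepsilon)\ge\mu(A)\ \text{for all } A\subset Y\}$, with $A_\varepsilon$ the $\varepsilon$-neighborhood of $A$ for $\delta$. *)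

From HB Require Import structures.
From mathcomp Require Import all_boot all_order all_algebra.
From mathcomp Require Import all_classical all_reals all_analysis measurable_realfun.
Set Implicit Arguments. Unset Strict Implicit. Unset Printing Implicit Defensive.
Import Order.TTheory GRing.Theory Num.Theory.
Local Open Scope classical_set_scope.
Local Open Scope ring_scope.

Definition is_metric {R : realType} {X : Type} (d : X -> X -> R) : Prop :=
  [/\ forall x y, 0 <= d x y,
      forall x y, d x y = 0 <-> x = y,
      forall x y, d x y = d y x &
      forall x y z, d x z <= d x y + d y z].

Definition d_open {R : realType} {X : Type} (d : X -> X -> R) (U : set X) : Prop :=
  forall x, U x -> exists2 e : R, 0 < e & forall y, d x y < e -> U y.

Definition nbhd {R : realType} {X : Type} (d : X -> X -> R) (A : set X) (e : R)
  : set X := [set y | exists2 a, A a & d a y < e].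

Definition LP {R : realType} {dX : measure_display} {X : measurableType dX}
  (d : X -> X -> R) (mu nu : set X -> \bar R) : \bar R :=
  ereal_inf [set e%:E | e in [set e : R | 0 < e /\
     forall A : set X, measurable A -> (mu A <= nu (nbhd d A e))%E]].

(* Levy-Prokhorov distance on the subspace F (with the restricted metric),
   for measures on X concentrated on F: measurable subsets of F are
   the measurable sets of X contained in F, and the e-neighbourhood of
   A in (F, d|F) is nbhd d A e `&` F. *)
Definition LP_on {R : realType} {dX : measure_display} {X : measurableType dX}
  (d : X -> X -> R) (F : set X) (mu nu : set X -> \bar R) : \bar R :=
  ereal_inf [set e%:E | e in [set e : R | 0 < e /\
     forall A : set X, measurable A -> A `<=` F ->
       (mu A <= nu (nbhd d A e `&` F))%E]].

Definition disintegration {R : realType} {dX d0 : measure_display}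
  {X : measurableType dX} {X0 : measurableType d0} (pi : X -> X0)
  (lam : {measure set X0 -> \bar R}) (mu : {measure set X -> \bar R})
  (mux : X0 -> {measure set X -> \bar R}) : Prop :=
  [/\ forall x, mux x (~` (pi @^-1` [set x])) = 0%E,
      forall A : set X, measurable A -> measurable_fun [set: X0] (fun x : X0 => (mux x A : \bar R)) &
      forall A : set X, measurable A -> mu A = (\int[lam]_x mux x A)%E].

(* Let e > 0 exceed every fibre distance and F_x := pi^-1 x.  On each fibre
   mu_x (A `&` F_x) <= nu_x (A_e `&` F_x); as mu_x and nu_x are concentrated
   on F_x this reads mu_x A <= nu_x A_e, and integrating against lam gives
   mu A <= nu A_e, i.e. d_L(mu, nu) <= e. *)
From HB Require Import structures.
From mathcomp Require Import all_boot all_order all_algebra.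
From mathcomp Require Import all_classical all_reals all_analysis measurable_realfun.
Import Order.TTheory GRing.Theory Num.Theory.
Local Open Scope classical_set_scope.
Local Open Scope ring_scope.

Section Neighbourhoods.
Context {R : realType} {X : Type} {d : X -> X -> R}.

Lemma nbhd_open (A : set X) (e : R) :
  (forall x y z, d x z <= d x y + d y z) -> d_open d (nbhd d A e).
Proof.
move=> dT y [a Aa day]; exists (e - d a y); first by rewrite subr_gt0.
move=> z dyz; exists a => //.
by rewrite (le_lt_trans (dT a y z)) // -ltrBrDl.
Qed.

Lemma nbhd_subset (A B : set X) (e e' : R) :
  A `<=` B -> e' <= e -> nbhd d A e' `<=` nbhd d B e.
Proof.
by move=> AB ee' z [a Aa daz]; exists a; [exact: AB | exact: lt_le_trans ee'].
Qed.

End Neighbourhoods.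

Lemma lee_nneg_gtr (R : realType) (x y : \bar R) : (0 <= y)%E ->
  (forall e : R, 0 < e -> (y < e%:E)%E -> (x <= e%:E)%E) -> (x <= y)%E.
Proof.
case: y => [r| |] //= r0 xle; last by rewrite leey.
apply/lee_addgt0Pr => e e0; rewrite -EFinD; apply: xle.
  by rewrite lee_fin in r0; exact: ltr_wpDl.
by rewrite lte_fin ltrDl.
Qed.

Lemma measure_setI_conull (d : measure_display) (T : measurableType d)
    (R : realType) (mu : {measure set T -> \bar R}) (A F : set T) :
  measurable A -> measurable F -> mu (~` F) = 0%E -> mu A = mu (A `&` F).
Proof.
move=> mA mF muCF0; rewrite (measureDI mu mA mF).
have mAF : measurable (A `\` F) by exact: measurableD.
by rewrite (subset_measure0 mAF (measurableC mF) _ muCF0) ?add0e // => z [].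
Qed.

Section LevyProkhorov.
Context {R : realType} {dX : measure_display} {X : measurableType dX}.
Context {d : X -> X -> R}.

Lemma LP_le (mu nu : set X -> \bar R) (e : R) : 0 < e ->
  (forall A, measurable A -> (mu A <= nu (nbhd d A e))%E) ->
  (LP d mu nu <= e%:E)%E.
Proof. by move=> e0 muA; apply: ereal_inf_lbound; exists e. Qed.

Lemma LP_on_ge0 (F : set X) (mu nu : set X -> \bar R) :
  (0 <= LP_on d F mu nu)%E.
Proof. by apply: le_ereal_inf_tmp => _ [e [e0 _] <-]; rewrite lee_fin ltW. Qed.

Lemma LP_on_lt {F : set X} {mu nu : {measure set X -> \bar R}} {e : R} :
  (forall x y z, d x z <= d x y + d y z) ->
  (forall U, d_open d U -> measurable U) -> measurable F ->
  (LP_on d F mu nu < e%:E)%E ->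
  forall A, measurable A -> (mu (A `&` F) <= nu (nbhd d A e `&` F))%E.
Proof.
move=> dT open_meas mF /ereal_inf_lt[_ [e' [_ muA] <-]].
rewrite lte_fin => e'e A mA.
have nbhdI_meas B r : measurable (nbhd d B r `&` F).
  by apply: measurableI => //; apply: open_meas; exact: nbhd_open.
apply: le_trans (muA _ (measurableI _ _ mA mF) (@subIsetr _ _ _)) _.
apply: le_measure; rewrite ?inE //.
by apply: setSI; apply: nbhd_subset; [exact: subIsetl | exact: ltW].
Qed.

End LevyProkhorov.

Section Disintegration.
Context {R : realType} {dX d0 : measure_display}.
Context {X : measurableType dX} {X0 : measurableType d0}.
Context { pi : X -> X0 } {lam : {measure set X0 -> \bar R}}.

Lemma disintegration_le {mu nu : {measure set X -> \bar R}}
    {mux nux : X0 -> {measure set X -> \bar R}} {A B : set X} :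
  disintegration pi lam mu mux -> disintegration pi lam nu nux ->
  measurable A -> measurable B -> (forall x, mux x A <= nux x B)%E ->
  (mu A <= nu B)%E.
Proof.
move=> [_ mux_meas muE] [_ nux_meas nuE] mA mB muxA.
rewrite muE // nuE //.
by apply: ge0_le_integral => //; [exact: mux_meas | exact: nux_meas].
Qed.

Lemma disintegration_fibre {mu : {measure set X -> \bar R}}
    {mux : X0 -> {measure set X -> \bar R}} {x : X0} {A : set X} :
  disintegration pi lam mu mux -> measurable (pi @^-1` [set x]) ->
  measurable A -> mux x A = mux x (A `&` pi @^-1` [set x]).
Proof. by move=> [mux0 _ _] mF mA; exact: measure_setI_conull. Qed.

End Disintegration.

Theorem lemma18p0p6 (R : realType) (dX d0 : measure_display)
  (X : measurableType dX) (X0 : measurableType d0)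
  (d : X -> X -> R) (pi : X -> X0)
  (lam : {measure set X0 -> \bar R}) (mu nu : {measure set X -> \bar R})
  (mux nux : X0 -> {measure set X -> \bar R}) :
  is_metric d ->
  (forall U : set X, d_open d U -> measurable U) ->
  measurable_fun setT pi ->
  (forall x : X0, measurable (pi @^-1` [set x])) ->
  pushforward mu pi = lam ->
  pushforward nu pi = lam ->
  disintegration pi lam mu mux ->
  disintegration pi lam nu nux ->
  (LP d mu nu <=
     ereal_sup [set LP_on d (pi @^-1` [set x]) (mux x) (nux x) | x in [set: X0]])%E.
Proof.
move=> [_ _ _ dT] open_meas _ mfibre _ _ Dmu Dnu.
have fibre_le_sup x : (LP_on d (pi @^-1` [set x]) (mux x) (nux x)
    <= ereal_sup [set LP_on d (pi @^-1` [set x]) (mux x) (nux x) | x in [set: X0]])%E.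
  by apply: ereal_sup_ubound; exists x.
apply: lee_nneg_gtr.
  by apply: le_trans (fibre_le_sup point); exact: LP_on_ge0.
move=> e e0 supe; apply: LP_le => // A mA.
have mAe : measurable (nbhd d A e) by apply: open_meas; exact: nbhd_open.
apply: (disintegration_le Dmu Dnu) => // x.
rewrite (disintegration_fibre Dmu (mfibre x) mA).
rewrite (disintegration_fibre Dnu (mfibre x) mAe).
apply: (LP_on_lt dT open_meas (mfibre x)) => //.
exact: le_lt_trans (fibre_le_sup x) supe.
Qed.
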